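(* If a hyperplane arrangement $\mathcal{H}\subset\mathbb{CP}^n$ is essential and irreducible, then there exist weights $a_H>0$ ($H\in\mathcal{H}$) such that for every $L\in\mathcal{L}$, $$\sum_{H\supset L}a_H<\frac{\operatorname{codim}L}{n+1}\sum_{H\in\mathcal{H}}a_H .$$
   Context: $\mathcal{H}$ is a finite set of distinct hyperplanes; $\mathcal{L}$ is the set of non-empty proper intersections of its members. $\mathcal{H}$ is essential if $\bigcap_HH=\emptyset$. A splitting is a decomposition $\mathcal{H}=\mathcal{H}_1\cup\mathcal{H}_2$ whose centres (intersections of members; $\mathbb{CP}^n$ for the empty collection) $T_1,T_2$ satisfy $T_1+T_2=\mathbb{CP}^n$ (projective span); non-trivial if both parts are non-empty; $\mathcal{H}$ is irreducible if it has no non-trivial splitting. *)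

(* Projective space CP^n is modelled linearly: a projective
   subspace of CP^n = P(C^(n+1)) is represented by a linear subspace of
   C^(n+1) = 'rV[C]_(n.+1) (mxalgebra row spaces), with C = R[i] for an
   arbitrary R : realType (every realType is a model of the reals, so R[i]
   is the field of complex numbers). *)
From HB Require Import structures.
From mathcomp Require Import all_boot all_order all_algebra.
From mathcomp Require Import reals complex.
Set Implicit Arguments. Unset Strict Implicit. Unset Printing Implicit Defensive.
Import Order.TTheory GRing.Theory Num.Theory.
Local Open Scope ring_scope.

Definition is_hyperplane (F : fieldType) (n : nat) (H : 'M[F]_(n.+1)) : bool :=
  \rank H == n.

Definition arrangement (F : fieldType) (n : nat) (I : finType)
    (Hs : I -> 'M[F]_(n.+1)) : Prop :=
  (forall i, is_hyperplane (Hs i)) /\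
  (forall i j, i != j -> ~~ (Hs i == Hs j)%MS).

(* Centre of a sub-collection S: intersection of its members; full space
   (= CP^n) for the empty collection. *)
Definition centre (F : fieldType) (n : nat) (I : finType)
    (Hs : I -> 'M[F]_(n.+1)) (S : {set I}) : 'M[F]_(n.+1) :=
  (\bigcap_(i in S) Hs i)%MS.

(* Projective subspace is empty iff the linear subspace is 0. *)
Definition proj_empty (F : fieldType) (n : nat) (T : 'M[F]_(n.+1)) : bool :=
  \rank T == 0%N.

Definition essential (F : fieldType) (n : nat) (I : finType)
    (Hs : I -> 'M[F]_(n.+1)) : Prop :=
  proj_empty (centre Hs setT).

Definition splitting (F : fieldType) (n : nat) (I : finType)
    (Hs : I -> 'M[F]_(n.+1)) (S : {set I}) : Prop :=
  (centre Hs S + centre Hs (~: S) == 1%:M)%MS.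

Definition irreducible_arr (F : fieldType) (n : nat) (I : finType)
    (Hs : I -> 'M[F]_(n.+1)) : Prop :=
  forall S : {set I}, S != set0 -> ~: S != set0 -> ~ splitting Hs S.

(* L is in the intersection poset: L = centre of a non-empty sub-collection,
   and L is non-empty (proper since the sub-collection is non-empty). *)
Definition in_poset (F : fieldType) (n : nat) (I : finType)
    (Hs : I -> 'M[F]_(n.+1)) (L : 'M[F]_(n.+1)) : Prop :=
  exists S : {set I}, S != set0 /\ ~~ proj_empty (centre Hs S) /\
    (L == centre Hs S)%MS.

Definition pcodim (F : fieldType) (n : nat) (L : 'M[F]_(n.+1)) : nat :=
  n.+1 - \rank L.

(* Weight each hyperplane by the number of bases of the arrangement that
   contain it, a basis being n+1 hyperplanes with empty common intersection.
   The total weight is (n+1) times the number of bases.  If T is the set of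
   hyperplanes through L, any basis B has at most codim(centre T) <= codim L
   members in T, since the members of B cut the space down independently; so
   the inequality holds non-strictly.  For strictness, irreducibility says the
   centres of T and of its complement span a proper subspace, hence
   dim (centre of the complement) < codim (centre T); a basis obtained by
   extending a maximal independent set of hyperplanes outside T has only
   dim (centre of the complement) members left over, so it meets T in fewer
   than codim L hyperplanes. *)

From HB Require Import structures.
From mathcomp Require Import all_boot all_order all_algebra.
From mathcomp Require Import reals complex.
From mathcomp Require Import zify.
Import Order.TTheory GRing.Theory Num.Theory.
Local Open Scope ring_scope.
Set Implicit Arguments. Unset Strict Implicit.

Lemma mxrank_cap_hyperplane (F : fieldType) (n : nat) (H U : 'M[F]_(n.+1)) :
  \rank H = n -> ~~ (U <= H)%MS -> (\rank (H :&: U)).+1 = \rank U.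
Proof.
move=> rH nUH; have sum_cap := mxrank_sum_cap U H.
rewrite capmxC rH in sum_cap.
have ltHUH : (n < \rank (U + H))%N.
  rewrite -{1}rH (ltn_leqif (mxrank_leqif_sup (addsmxSr U H))).
  by apply: contra nUH; apply: submx_trans (addsmxSl U H).
have := rank_leq_col (U + H)%MS; lia.
Qed.

Lemma ltn_sum_witness (I : finType) (A : {pred I}) (E1 E2 : I -> nat) i0 :
  i0 \in A -> (forall i, i \in A -> E1 i <= E2 i)%N -> (E1 i0 < E2 i0)%N ->
  (\sum_(i in A) E1 i < \sum_(i in A) E2 i)%N.
Proof.
move=> Ai0 leE ltE.
rewrite (bigD1 i0) //= [X in (_ < X)%N](bigD1 i0) //= -addSn leq_add //.
by apply: leq_sum => i /andP[Ai _]; apply: leE.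
Qed.

Lemma card_set_sum (T : finType) (A : {set T}) (P : pred T) :
  #|[set x in A | P x]| = (\sum_(x in A) P x)%N.
Proof. by rewrite -sum1dep_card big_mkcondr; apply: eq_bigr => x _; case: (P x). Qed.

Section Centres.

Variables (F : fieldType) (n : nat) (I : finType) (Hs : I -> 'M[F]_(n.+1)).

Lemma centre_sub (S : {set I}) i : i \in S -> (centre Hs S <= Hs i)%MS.
Proof. by move=> Si; apply: bigcapmx_inf Si _. Qed.

Lemma centreS (S T : {set I}) : S \subset T -> (centre Hs T <= centre Hs S)%MS.
Proof. by move=> sST; apply/sub_bigcapmxP => i /(subsetP sST); apply: centre_sub. Qed.

Lemma centreU (S T : {set I}) : (centre Hs (S :|: T) :=: centre Hs S :&: centre Hs T)%MS.
Proof.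
apply/eqmxP/andP; split; first by rewrite sub_capmx !centreS ?subsetUl ?subsetUr.
apply/sub_bigcapmxP => i; rewrite in_setU => /orP[Si|Ti].
  by apply: submx_trans (capmxSl _ _) (centre_sub Si).
by apply: submx_trans (capmxSr _ _) (centre_sub Ti).
Qed.

Lemma centre1 i : centre Hs [set i] = Hs i.
Proof. exact: big_set1. Qed.

Lemma centre0 : centre Hs set0 = 1%:M.
Proof. exact: big_set0. Qed.

Lemma rank_centre_split_le (S : {set I}) :
  ~ splitting Hs S -> (\rank (centre Hs S + centre Hs (~: S)) <= n)%N.
Proof.
move=> nsplit; rewrite -ltnS ltn_neqAle rank_leq_col andbT.
apply/negP => full; apply: nsplit; apply/andP.
by rewrite submx1 sub1mx.
Qed.

End Centres.

Section Bases.

Variables (F : fieldType) (n : nat) (I : finType) (Hs : I -> 'M[F]_(n.+1)).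
Hypothesis rank_Hs : forall i, \rank (Hs i) = n.

(* Greedily keep those members of C that lower the rank of the centre. *)
Lemma centre_extension (A C : {set I}) :
  exists2 D : {set I}, D \subset C :\: A &
    (#|D| + \rank (centre Hs (A :|: C)) = \rank (centre Hs A))%N /\
    (centre Hs (A :|: D) :=: centre Hs (A :|: C))%MS.
Proof.
have [k ltCk] := ubnP #|C|; elim: k C ltCk => // k IH C ltCk.
have [->|[x Cx]] := set_0Vmem C.
  by exists set0; rewrite ?sub0set ?cards0 ?setU0.
have ltC'k : (#|C :\ x| < k)%N by rewrite (cardsD1 x) Cx in ltCk.
have [D sD [cardD eqD]] := IH _ ltC'k.
set U := centre Hs (A :|: C :\ x) in cardD eqD.
have eqC : (centre Hs (A :|: C) :=: Hs x :&: U)%MS.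
  rewrite -{1}(setD1K Cx) setUCA; apply: eqmx_trans (centreU _ _ _) _.
  by rewrite centre1.
have sDC : D \subset C :\: A.
  by apply: subset_trans sD _; apply: setSD; apply: subD1set.
have [xU|nxU] := boolP (U <= Hs x)%MS.
  exists D => //; split; first by rewrite eqC (capmx_idPr xU).
  by apply: eqmx_trans eqD _; apply: eqmx_sym; apply: eqmx_trans eqC (capmx_idPr xU).
have xA : x \notin A.
  apply: contra nxU => xA; apply: submx_trans (centreS _ (subsetUl A _)) _.
  exact: centre_sub.
have xD : x \notin D by apply/negP => /(subsetP sD); rewrite !inE eqxx andbF.
exists (x |: D).
  by rewrite subUset sub1set inE xA Cx.
split.
  by rewrite cardsU1 xD eqC -cardD -(mxrank_cap_hyperplane (rank_Hs x) nxU) addnS.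
rewrite setUCA; apply: eqmx_trans (centreU _ _ _) _.
by rewrite centre1; apply: eqmx_trans (cap_eqmx (eqmx_refl _) eqD) (eqmx_sym eqC).
Qed.

Lemma exists_independent_subset (C : {set I}) :
  exists2 D : {set I}, D \subset C &
    (#|D| + \rank (centre Hs C) = n.+1)%N /\ (centre Hs D :=: centre Hs C)%MS.
Proof.
have [D sDC [cardD eqD]] := centre_extension set0 C.
exists D; first by apply: subset_trans sDC (subsetDl _ _).
by move: cardD eqD; rewrite !set0U centre0 mxrank1.
Qed.

Definition arr_bases : {set {set I}} :=
  [set B : {set I} | (#|B| == n.+1) && (\rank (centre Hs B) == 0%N)].

Definition basis_degree i := #|[set B in arr_bases | i \in B]|.

Lemma card_basis_cap (T B : {set I}) :
  B \in arr_bases -> (#|B :&: T| + \rank (centre Hs T) <= n.+1)%N.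
Proof.
rewrite inE => /andP[/eqP cardB /eqP rankB].
have [D sD [cardD _]] := centre_extension (B :&: T) (B :\: T).
move: cardD; rewrite setID rankB addn0 => cardD.
have rankT : (\rank (centre Hs T) <= \rank (centre Hs (B :&: T)))%N.
  exact/mxrankS/centreS/subsetIr.
have := subset_leq_card (subset_trans sD (subsetDl _ _)).
have := cardsID T B; lia.
Qed.

Hypothesis Hs_essential : essential Hs.

Lemma rank_centreT : \rank (centre Hs setT) = 0%N.
Proof. exact/eqP. Qed.

Lemma exists_basis_superset (D : {set I}) :
  (#|D| + \rank (centre Hs D) = n.+1)%N -> exists2 B, B \in arr_bases & D \subset B.
Proof.
move=> cardD; have [E sE [cardE eqE]] := centre_extension D setT.
exists (D :|: E); last exact: subsetUl.
rewrite inE eqE setUT rank_centreT eqxx andbT cardsU.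
suff -> : D :&: E = set0 by rewrite cards0 subn0 -cardD -cardE setUT rank_centreT addn0.
by apply/disjoint_setI0; rewrite disjoint_sym disjoints_subset -setTD.
Qed.

Lemma basis_degree_gt0 i : (0 < basis_degree i)%N.
Proof.
have [|B Bbasis sIB] := @exists_basis_superset [set i].
  by rewrite cards1 centre1 rank_Hs.
by apply/card_gt0P; exists B; rewrite inE Bbasis (subsetP sIB) ?set11.
Qed.

Lemma sum_basis_degree (T : {set I}) :
  (\sum_(i in T) basis_degree i = \sum_(B in arr_bases) #|B :&: T|)%N.
Proof.
rewrite /basis_degree; under eq_bigr do rewrite card_set_sum.
rewrite exchange_big; apply: eq_bigr => B _.
by rewrite -card_set_sum; apply: eq_card => i; rewrite !inE andbC.
Qed.

Lemma exists_basis_cap_lt (T : {set I}) :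
  (\rank (centre Hs T + centre Hs (~: T)) <= n)%N ->
  exists2 B, B \in arr_bases & (#|B :&: T| + \rank (centre Hs T) < n.+1)%N.
Proof.
move=> rank_sum; have [D sD [cardD eqD]] := exists_independent_subset (~: T).
have [|B Bbasis sDB] := @exists_basis_superset D; first by rewrite eqD.
exists B => //.
have capT : B :&: T \subset B :\: D.
  apply/subsetP => i; rewrite !inE => /andP[iB iT]; rewrite iB andbT.
  by apply: contraL iT => /(subsetP sD); rewrite inE.
have := subset_leq_card capT; rewrite cardsDS //.
move: Bbasis; rewrite inE => /andP[/eqP -> _].
have := mxrank_sum_cap (centre Hs T) (centre Hs (~: T)).
rewrite -(centreU Hs T (~: T)) setUCr rank_centreT.
lia.
Qed.

Lemma sum_basis_degree_setT : (\sum_i basis_degree i = #|arr_bases| * n.+1)%N.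
Proof.
have -> : (\sum_i basis_degree i = \sum_(i in setT) basis_degree i)%N.
  by apply: eq_bigl => i; rewrite in_setT.
rewrite sum_basis_degree -sum_nat_const; apply: eq_bigr => B.
by rewrite setIT inE => /andP[/eqP].
Qed.

Lemma sum_basis_degree_lt (T : {set I}) :
  (\rank (centre Hs T + centre Hs (~: T)) <= n)%N ->
  (\sum_(i in T) basis_degree i < #|arr_bases| * (n.+1 - \rank (centre Hs T)))%N.
Proof.
move=> /exists_basis_cap_lt[B0 B0basis ltB0].
rewrite sum_basis_degree -sum_nat_const; apply: (ltn_sum_witness B0basis).
  by move=> B /(card_basis_cap T); lia.
lia.
Qed.

End Bases.

Theorem corollaryB2 (R : realType) (n : nat) (I : finType)
    (Hs : I -> 'M[R[i]]_(n.+1)) :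
  arrangement Hs -> essential Hs -> irreducible_arr Hs ->
  exists a : I -> R, (forall i, 0 < a i) /\
    forall L : 'M[R[i]]_(n.+1), in_poset Hs L ->
      \sum_(i | (L <= Hs i)%MS) a i <
        ((pcodim L)%:R / (n.+1)%:R) * \sum_(i : I) a i.
Proof.
move=> [hyperplanes _] ess irr.
have rank_Hs i : \rank (Hs i) = n by apply/eqP; apply: hyperplanes.
exists (fun i => (basis_degree Hs i)%:R); split => [i|L [S [S0 [nonempty eqL]]]].
  by rewrite ltr0n (basis_degree_gt0 rank_Hs ess).
set T := [set i | (L <= Hs i)%MS].
have LT : (L <= centre Hs T)%MS by apply/sub_bigcapmxP => i; rewrite inE.
have T0 : T != set0.
  apply: contraNneq S0 => T0; rewrite -subset0 -T0; apply/subsetP => i Si.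
  by rewrite inE (eqmxP eqL) centre_sub.
have CT0 : ~: T != set0.
  apply: contra nonempty => /eqP CT0; move/mxrankS: LT.
  by rewrite -[T]setCK CT0 setC0 (rank_centreT ess) leqn0 /proj_empty (eqmx_rank eqL).
have rank_split := rank_centre_split_le (irr T T0 CT0).
rewrite -!natr_sum sum_basis_degree_setT.
rewrite (eq_bigl (fun i => i \in T)) => [|i]; last by rewrite inE.
have -> : (pcodim L)%:R / (n.+1)%:R * (#|arr_bases Hs| * n.+1)%:R
    = (#|arr_bases Hs| * pcodim L)%:R :> R.
  by rewrite !natrM mulrCA divfK ?pnatr_eq0.
rewrite ltr_nat; apply: leq_trans (sum_basis_degree_lt rank_Hs ess rank_split) _.
by rewrite leq_mul2l leq_sub2l ?orbT ?mxrankS.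
Qed.
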